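(* Let $k\ge3$, $1\le s\le k$, $\mathbf n=(n_1,\dots,n_k)$, $r\le\min\{n_1,\dots,n_s\}$. For every $\mathcal A\in P_s(\mathbf n,r)$, $\operatorname{rank}(\mathcal A)=\operatorname{rank}(A_1)$, where $A_1\in\mathbb R^{n_1\times\prod_{i=2}^kn_i}$ is the flattening (matricization) of $\mathcal A$ with respect to its first factor.
   Context: $P_s(\mathbf n,r)$ is the set of tensors $\sum_{i=1}^r\sigma_i\mathbf a^{(1)}_i\otimes\cdots\otimes\mathbf a^{(k)}_i$ with $\sigma_i\in\mathbb R$, all $\mathbf a^{(l)}_i\in\mathbb R^{n_l}$ unit vectors, and for each $l\le s$ the vectors $\mathbf a^{(l)}_1,\dots,\mathbf a^{(l)}_r$ pairwise orthogonal. $\operatorname{rank}(\mathcal A)$ is the CP rank (least number of rank-one tensors summing to $\mathcal A$). *)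

From HB Require Import structures.
From mathcomp Require Import all_boot all_order all_algebra.
From mathcomp Require Import reals.
Set Implicit Arguments. Unset Strict Implicit. Unset Printing Implicit Defensive.
Import Order.TTheory GRing.Theory Num.Theory.
Local Open Scope ring_scope.

Section Tensors.
Variables (R : realType) (k : nat) (n : 'I_k -> nat).

Definition idx := {dffun forall l : 'I_k, 'I_(n l)}.
Local Notation tensor := {ffun idx -> R}.

Definition factors := forall l : 'I_k, 'I_(n l) -> R.

Definition outer (a : factors) : tensor := [ffun x : idx => \prod_(l < k) a l (x l)].

Definition has_cp_decomp (A : tensor) (m : nat) : Prop :=
  exists a : 'I_m -> factors, A = \sum_(i < m) outer (a i).

Definition is_cp_rank (A : tensor) (m : nat) : Prop :=
  has_cp_decomp A m /\ forall m', has_cp_decomp A m' -> (m <= m')%N.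

Definition dotv (p : nat) (u v : 'I_p -> R) : R := \sum_(j < p) u j * v j.

(* P_s(n, r): the tensors sum_i sigma_i a_i^(1) o ... o a_i^(k) with unit factor
   vectors, pairwise orthogonal in every mode l with l <= s (1-based), i.e.
   val l < s (0-based). *)
Definition in_Ps (s r : nat) (A : tensor) : Prop :=
  exists (sigma : 'I_r -> R) (a : 'I_r -> factors),
    [/\ forall (i : 'I_r) (l : 'I_k), dotv (a i l) (a i l) = 1,
        forall (l : 'I_k), (val l < s)%N -> forall i j : 'I_r, i != j ->
          dotv (a i l) (a j l) = 0
      & A = \sum_(i < r) [ffun x => sigma i * outer (a i) x]].

Definition rest_idx (f : 'I_k) :=
  {dffun forall l : {l : 'I_k | l != f}, 'I_(n (val l))}.

Definition combine (f : 'I_k) (i : 'I_(n f)) (x : rest_idx f) : idx :=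
  finfun (fun l : 'I_k =>
    match @idP (l != f) return 'I_(n l) with
    | ReflectT h => x (exist _ l h)
    | ReflectF h => cast_ord (congr1 n (esym (elimT eqP (negbNE (introN idP h))))) i
    end).

(* matricization A_(f) : rows indexed by i_f, columns by the remaining
   multi-indices (enumerated in a fixed order; #|rest_idx f| = prod_{l<>f} n_l) *)
Definition flattening (f : 'I_k) (A : tensor) : 'M[R]_(n f, #|{: rest_idx f}|) :=
  \matrix_(i, j) A (combine i (enum_val j)).

End Tensors.

Definition mode1 (k : nat) (hk : (3 <= k)%N) : 'I_k :=
  Ordinal (leq_trans (isT : (0 < 3)%N) hk).

From HB Require Import structures.
From mathcomp Require Import all_boot all_order all_algebra.
From mathcomp Require Import reals.
Set Implicit Arguments. Unset Strict Implicit. Unset Printing Implicit Defensive.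
Import Order.TTheory GRing.Theory Num.Theory.
Local Open Scope ring_scope.

(* Flattening a sum of m weighted rank-one tensors along a mode f factors it as
   U *m B, where the columns of U are the mode-f factor vectors and the rows of
   B are the weighted rank-one tensors in the remaining modes; hence
   rank A_(f) <= m for every CP decomposition.  Conversely, if the rows of A_(f)
   lie in the row space of such a B, a row basis of B extracted from it yields a
   CP decomposition with rank B terms.  For A in P_s the mode-1 factors are
   orthonormal, so U^T U = 1 and rank B = rank (U B) = rank A_(1). *)

Lemma mxrankM_linv (F : fieldType) m p q (U : 'M[F]_(m, p)) (V : 'M[F]_(p, m))
    (B : 'M[F]_(p, q)) :
  V *m U = 1%:M -> \rank (U *m B) = \rank B.
Proof.
move=> VU; apply/eqP; rewrite eqn_leq mxrankM_maxr /=.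
by rewrite -{1}[B]mul1mx -VU -mulmxA mxrankM_maxr.
Qed.

(* The matches in [combine] cannot be destructed by [case: idP]: the branch for
   [l != f] uses its proof at that literal type, so we eliminate them through
   these two lemmas instead. *)
Lemma reflect_matchT (P : Prop) (b : bool) (T : Type) (p : reflect P b)
    (g : P -> T) (e : ~ P -> T) (Q : T -> Prop) :
  P -> (forall h, Q (g h)) ->
  Q (match p with ReflectT h => g h | ReflectF h => e h end).
Proof. by case: p => [h _|nh /nh]. Qed.

Lemma reflect_matchF (P : Prop) (b : bool) (T : Type) (p : reflect P b)
    (g : P -> T) (e : ~ P -> T) (Q : T -> Prop) :
  ~ P -> (forall h, Q (e h)) ->
  Q (match p with ReflectT h => g h | ReflectF h => e h end).
Proof. by case: p => [h /(_ h)|nh _]. Qed.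

Section Flattening.
Variables (R : realType) (k : nat) (n : 'I_k -> nat) (f : 'I_k).

Lemma combine_f (i : 'I_(n f)) (y : rest_idx n f) : combine i y f = i.
Proof.
rewrite /combine ffunE.
apply: (@reflect_matchF _ _ _ _ _ _ (eq^~ i)) => [|h]; first by rewrite eqxx.
exact: val_inj.
Qed.

Lemma combine_neq (i : 'I_(n f)) (y : rest_idx n f) (l : 'I_k) (nlf : l != f) :
  combine i y l = y (exist _ l nlf).
Proof.
rewrite /combine ffunE.
apply: (@reflect_matchT _ _ _ _ _ _ (eq^~ _) nlf) => h.
by rewrite (eq_irrelevance h nlf).
Qed.

Definition rest (x : idx n) : rest_idx n f :=
  [ffun l : {l : 'I_k | l != f} => x (val l)].

Lemma combine_rest (x : idx n) : combine (x f) (rest x) = x.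
Proof.
apply/ffunP => l; have [->|nlf] := eqVneq l f; first exact: combine_f.
by rewrite (combine_neq _ _ nlf) ffunE.
Qed.

Lemma tensor_eq_combine (A B : {ffun idx n -> R}) :
  (forall (i : 'I_(n f)) y, A (combine i y) = B (combine i y)) -> A = B.
Proof. by move=> eqAB; apply/ffunP => x; rewrite -(combine_rest x). Qed.

Lemma flatteningE (A : {ffun idx n -> R}) (i : 'I_(n f)) (y : rest_idx n f) :
  flattening f A i (enum_rank y) = A (combine i y).
Proof. by rewrite mxE enum_rankK. Qed.

Definition rest_outer (a : factors R n) (y : rest_idx n f) : R :=
  \prod_(l : {l : 'I_k | l != f}) a (val l) (y l).

Lemma outer_combine (a : factors R n) i y :
  outer a (combine i y) = a f i * rest_outer a y.
Proof.
rewrite ffunE (bigD1 f) //= combine_f; congr (_ * _).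
rewrite (big_sub (fun l => l != f)); apply: eq_bigr => -[l nlf] _ /=.
by rewrite (combine_neq _ _ nlf).
Qed.

Definition mode_mx m (a : 'I_m -> factors R n) : 'M[R]_(n f, m) :=
  \matrix_(j, t) a t f j.

Definition rest_mx m (c : 'I_m -> R) (a : 'I_m -> factors R n) :
    'M[R]_(m, #|{: rest_idx n f}|) :=
  \matrix_(t, y) (c t * rest_outer (a t) (enum_val y)).

Lemma flattening_weighted_sum m (c : 'I_m -> R) (a : 'I_m -> factors R n) :
  flattening f (\sum_(t < m) [ffun x => c t * outer (a t) x]) =
  mode_mx a *m rest_mx c a.
Proof.
apply/matrixP => j y; rewrite !mxE sum_ffunE; apply: eq_bigr => t _.
by rewrite ffunE outer_combine !mxE mulrCA.
Qed.

Lemma mxrank_flattening_le (A : {ffun idx n -> R}) m :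
  has_cp_decomp A m -> (\rank (flattening f A) <= m)%N.
Proof.
move=> [a ->]; have -> : \sum_(t < m) outer (a t) =
    \sum_(t < m) [ffun x => 1 * outer (a t) x].
  by apply: eq_bigr => t _; apply/ffunP => x; rewrite [RHS]ffunE mul1r.
by rewrite flattening_weighted_sum (leq_trans (mxrankM_maxl _ _)) ?rank_leq_col.
Qed.

Lemma is_cp_rank_flattening (A : {ffun idx n -> R}) :
  has_cp_decomp A (\rank (flattening f A)) ->
  is_cp_rank A (\rank (flattening f A)).
Proof. by move=> decA; split=> // m; apply: mxrank_flattening_le. Qed.

Definition with_mode (a : factors R n) (v : 'I_(n f) -> R) : factors R n :=
  fun l => if l =P f is ReflectT e then fun j => v (cast_ord (congr1 n e) j)
           else a l.
Arguments with_mode : clear implicits.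

Lemma with_mode_f (a : factors R n) (v : 'I_(n f) -> R) (j : 'I_(n f)) :
  with_mode a v f j = v j.
Proof. by rewrite /with_mode; case: eqP => // e; congr v; apply: val_inj. Qed.

Lemma with_mode_neq (a : factors R n) v l : l != f -> with_mode a v l = a l.
Proof. by rewrite /with_mode; case: eqP. Qed.

Lemma outer_with_mode_combine (a : factors R n) v i y :
  outer (with_mode a v) (combine i y) = v i * rest_outer a y.
Proof.
rewrite outer_combine with_mode_f; congr (_ * _).
by apply: eq_bigr => l _; rewrite with_mode_neq ?(valP l).
Qed.

Lemma cp_decomp_of_flattening_submx (A : {ffun idx n -> R}) m
    (c : 'I_m -> R) (a : 'I_m -> factors R n) :
  (flattening f A <= rest_mx c a)%MS -> has_cp_decomp A (\rank (rest_mx c a)).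
Proof.
set B := rest_mx c a; set p := maxrankfun B => sAB.
have /submxP[C defA] : (flattening f A <= rowsub p B)%MS.
  by rewrite eq_maxrowsub.
exists (fun t => with_mode (a (p t)) (fun j => C j t * c (p t))).
apply: tensor_eq_combine => i y; rewrite sum_ffunE -flatteningE defA mxE.
apply: eq_bigr => t _.
by rewrite outer_with_mode_combine !mxE enum_rankK mulrA.
Qed.

Lemma mode_mx_orthonormal m (a : 'I_m -> factors R n) :
  (forall t, dotv (a t f) (a t f) = 1) ->
  (forall t u, t != u -> dotv (a t f) (a u f) = 0) ->
  (mode_mx a)^T *m mode_mx a = 1%:M.
Proof.
move=> unit orth; apply/matrixP => t u; rewrite !mxE.
under eq_bigr do rewrite !mxE.
by have [<-|] := eqVneq t u; [apply: unit | apply: orth].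
Qed.

End Flattening.

Theorem proposition3p4 (R : realType) (k : nat) (hk : (3 <= k)%N)
  (s : nat) (hs : (1 <= s <= k)%N) (n : 'I_k -> nat) (r : nat)
  (hr : forall l : 'I_k, (val l < s)%N -> (r <= n l)%N)
  (A : {ffun idx n -> R}) :
  in_Ps s r A -> is_cp_rank A (\rank (flattening (mode1 hk) A)).
Proof.
move=> [sigma [a [unit orth ->]]]; set f := mode1 hk.
have orthU : (mode_mx f a)^T *m mode_mx f a = 1%:M.
  by apply: mode_mx_orthonormal => // t u; apply: orth; case/andP: hs.
apply: is_cp_rank_flattening.
rewrite flattening_weighted_sum (mxrankM_linv _ orthU).
apply: cp_decomp_of_flattening_submx.
by rewrite flattening_weighted_sum submxMl.
Qed.
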